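(* Let $\|\cdot\|$ be a norm on $\mathbb{R}^d$ and let $Q$ be a collection of finite subsets of $\mathbb{R}^d$, each with at least $2$ elements. Let $E_0=\{e\subseteq\mathbb{R}^d\mid e \text{ is congruent to some } f\in Q\}$. For each $t\in\mathbb{Z}^+$ let $B_t=\{f\cup T\mid f\in Q,\ T\subseteq\mathbb{R}^d,\ f\cap T=\emptyset,\ |T|=t\}$ and $E_t=\{e\subseteq\mathbb{R}^d\mid e \text{ is congruent to some } g\in B_t\}$. Let $\mathcal{H}_0=(\mathbb{R}^d,E_0)$ and $\mathcal{H}_t=(\mathbb{R}^d,E_t)$. If $\chi(\mathcal{H}_0)<\infty$, then $\chi(\mathcal{H}_t)=\chi(\mathcal{H}_0)$ for every $t\in\mathbb{Z}^+$.
   Context: Congruence is in $(\mathbb{R}^d,\|\cdot\|)$: two sets are congruent iff one is the image of the other under a composition, in either order, of a surjective linear isometry of $(\mathbb{R}^d,\|\cdot\|)$ and a translation. A hypergraph $(V,E)$ has edges that are subsets of $V$ of size at least $2$; a proper coloring makes no edge monochromatic; $\chi$ is the least number of colors of a proper coloring. $\mathbb{Z}^+$ denotes the positive integers. *)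

From HB Require Import structures.
From mathcomp Require Import all_boot all_order all_algebra.
From mathcomp Require Import boolp classical_sets cardinality reals.
Set Implicit Arguments. Unset Strict Implicit. Unset Printing Implicit Defensive.
Import Order.TTheory GRing.Theory Num.Theory.
Local Open Scope ring_scope.
Local Open Scope classical_set_scope.

Definition is_norm (R : realType) (d : nat) (N : 'rV[R]_d -> R) : Prop :=
  [/\ (forall x, N x = 0 -> x = 0),
      (forall (a : R) x, N (a *: x) = `|a| * N x) &
      (forall x y, N (x + y) <= N x + N y)].

Definition lin_isometry (R : realType) (d : nat) (N : 'rV[R]_d -> R)
  (f : 'rV[R]_d -> 'rV[R]_d) : Prop :=
  [/\ (forall (a : R) x y, f (a *: x + y) = a *: f x + f y),
      (forall y, exists x, f x = y) &
      (forall x, N (f x) = N x)].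

Definition congruent (R : realType) (d : nat) (N : 'rV[R]_d -> R)
  (A B : set 'rV[R]_d) : Prop :=
  exists (f : 'rV[R]_d -> 'rV[R]_d) (v : 'rV[R]_d), lin_isometry N f /\
    (B = (fun x => f x + v) @` A \/ B = (fun x => f (x + v)) @` A).

Definition has_card (T : eqType) (A : set T) (t : nat) : Prop :=
  exists s : seq T, [/\ uniq s, size s = t & A = [set x | x \in s]].

Definition proper_coloring (V : Type) (E : set (set V)) (k : nat)
  (c : V -> 'I_k) : Prop :=
  forall e, E e -> ~ (exists i : 'I_k, forall x, e x -> c x = i).

Definition colorable (V : Type) (E : set (set V)) (k : nat) : Prop :=
  exists c : V -> 'I_k, proper_coloring E c.

Definition chromatic_number_is (V : Type) (E : set (set V)) (n : nat) : Prop :=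
  colorable E n /\ forall m, colorable E m -> (n <= m)%N.

Definition E0 (R : realType) (d : nat) (N : 'rV[R]_d -> R)
  (Q : set (set 'rV[R]_d)) : set (set 'rV[R]_d) :=
  [set e | exists f, Q f /\ congruent N f e].

Definition Bt (R : realType) (d : nat) (Q : set (set 'rV[R]_d)) (t : nat)
  : set (set 'rV[R]_d) :=
  [set g | exists f T, [/\ Q f, f `&` T = set0, has_card T t & g = f `|` T]].

Definition Et (R : realType) (d : nat) (N : 'rV[R]_d -> R)
  (Q : set (set 'rV[R]_d)) (t : nat) : set (set 'rV[R]_d) :=
  [set e | exists g, Bt Q t g /\ congruent N g e].

From mathcomp Require Import all_boot all_order all_algebra finmap.
From mathcomp Require Import boolp classical_sets cardinality reals filter.
Import Order.TTheory GRing.Theory Num.Theory.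
Local Open Scope ring_scope.
Local Open Scope classical_set_scope.
Set Implicit Arguments. Unset Strict Implicit. Unset Printing Implicit Defensive.

(* Every edge of E_t contains an edge of E_0, so chi(H_t) <= chi(H_0).
   Conversely, let c be a proper k-colouring of H_t.  By the de Bruijn-Erdos
   compactness argument it suffices to k-colour H_0 restricted to each finite
   set A.  Only finitely many points lie in a finite colour class of c, so
   some translate A + w lies entirely in infinite colour classes; colour x by
   c (x + w).  A monochromatic E_0 edge e inside A would give the
   monochromatic E_0 edge e + w inside an infinite class, and adding t more
   points of that class gives a monochromatic E_t edge. *)

Lemma colorable_subedges (V : Type) (E E' : set (set V)) (k : nat) :
  (forall e', E' e' -> exists2 e, E e & e `<=` e') ->
  colorable E k -> colorable E' k.
Proof.
move=> sub [c c_proper]; exists c => e' /sub [e Ee ee'] [i e'_mono].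
by apply: (c_proper e Ee); exists i => x /ee'/e'_mono.
Qed.

Lemma ultra_fiber (T : Type) (I : finType) (U : set_system T) (g : T -> I) :
  UltraFilter U -> exists i, U (g @^-1` [set i]).
Proof.
move=> UU; apply: contrapT => /forallNP noFiber.
have UnoFiber i : U (~` (g @^-1` [set i])).
  by case: (in_ultra_setVsetC (g @^-1` [set i]) UU) => // /noFiber.
have : U (\bigcap_(i in [set` [fset i in enum I]%fset]) ~` (g @^-1` [set i])).
  by apply: filter_bigI => // i _; exact: UnoFiber.
move=> /filter_ex [x noFiber_x].
by apply: (noFiber_x (g x)) => //=; rewrite inE mem_enum.
Qed.

Lemma colorable_of_finite_subhypergraphs (V : choiceType) (E : set (set V))
    (k : nat) :
  (forall e, E e -> finite_set e) ->
  (forall A : {fset V}, colorable [set e | E e /\ e `<=` [set` A]] k) ->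
  colorable E k.
Proof.
move=> Efin /choice [cA cA_proper].
pose above (A : {fset V}) := [set B : {fset V} | (A `<=` B)%fset].
have F0 : ProperFilter (filter_from setT above).
  apply: filter_from_proper => [|A _]; last by exists A; exact: fsubset_refl.
  apply: filter_from_filter => [|A B _ _]; first by exists fset0.
  by exists (A `|` B)%fset => // C; rewrite /above /= fsubUset => /andP.
have [U [UU F0U]] := ultraFilterLemma F0.
(* c x is the colour that cA A gives to x for U-almost all A. *)
have [c cU] := choice (fun x => @ultra_fiber _ _ U (cA^~ x) UU).
exists c => e Ee [i e_mono].
pose Ae := fset_set e.
have Ue : U (above Ae) by apply: F0U; exists Ae.
have Uc : U (\bigcap_(x in [set` Ae]) [set A | cA A x = c x]).
  by apply: filter_bigI => // x _; exact: cU.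
have [A [AeA cAc]] := filter_ex (filterI Ue Uc).
have eA : e `<=` [set` A].
  move=> x ex; apply: (fsubsetP AeA).
  by rewrite in_fset_set ?inE //; exact: Efin.
apply: (cA_proper A e (conj Ee eA)); exists i => x ex.
rewrite -(e_mono x ex); apply: cAc; rewrite /= in_fset_set ?inE //; exact: Efin.
Qed.

Lemma finite_set_finite_fibers (T : Type) (k : nat) (c : T -> 'I_k) :
  finite_set [set y | finite_set (c @^-1` [set c y])].
Proof.
apply: (@sub_finite_set _ _
  (\bigcup_(j in [set j | finite_set (c @^-1` [set j])]) (c @^-1` [set j]))).
  by move=> y fy; exists (c y).
by apply: bigcup_finite => [|j]; [exact: finite_finset|].
Qed.

Lemma infinite_set_has_card (T : choiceType) (A : set T) (t : nat) :
  infinite_set A -> exists2 B, B `<=` A & has_card B t.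
Proof.
move=> /(infinite_set_fset t) [B BA tB].
exists [set` take t B]; last first.
  exists (take t B); split => //; first exact: take_uniq.
  by rewrite size_take_min; apply/minn_idPl.
by move=> x /mem_take xB; exact: BA.
Qed.

Lemma has_card_image_surj (A B : eqType) (g : A -> B) (T : set B) (t : nat) :
  (forall y, exists x, g x = y) -> has_card T t ->
  exists2 T', has_card T' t & T = g @` T'.
Proof.
move=> /choice [h gh] [s [us <- ->]].
have hK : map g (map h s) = s.
  by rewrite -map_comp map_id_in // => y _; exact: gh.
exists [set` map h s].
  exists (map h s); split => //; last by rewrite size_map.
  by move: us; rewrite -{1}hK => /map_uniq.
apply/seteqP; split => y /=.
  by move=> ys; exists (h y); [exact: map_f|exact: gh].
by move=> [x xs <-]; rewrite -hK map_f.
Qed.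

Lemma rV_infinite (R : numDomainType) (d : nat) :
  (0 < d)%N -> infinite_set [set: 'rV[R]_d].
Proof.
move=> d_gt0; pose g (n : nat) : 'rV[R]_d := n%:R *: const_mx 1.
have g_inj : {in [set: nat] &, injective g}.
  move=> m n _ _ /matrixP /(_ ord0 (Ordinal d_gt0)).
  by rewrite !mxE !mulr1 => /eqP; rewrite eqr_nat => /eqP.
apply: (@sub_infinite_set _ (g @` [set: nat])) => //.
by rewrite (eq_finite_set (inj_card_eq g_inj)); exact: infinite_nat.
Qed.

Lemma translation_avoiding (R : numDomainType) (d : nat)
    (S F : set 'rV[R]_d) :
  (0 < d)%N -> finite_set S -> finite_set F ->
  exists w, forall x, S x -> ~ F (x + w).
Proof.
move=> d_gt0 finS finF.
pose bad := \bigcup_(x in S) [set y - x | y in F].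
have finBad : finite_set bad.
  by apply: bigcup_finite => // x _; exact: finite_image.
have [w [_ notBad]] :=
  infinite_setN0 (infinite_setD (@rV_infinite R _ d_gt0) finBad).
exists w => x Sx Fxw; apply: notBad; exists x => //.
by exists (x + w) => //; rewrite addrAC subrr add0r.
Qed.

Lemma rV_dim_gt0 (R : numDomainType) (d : nat) (x y : 'rV[R]_d) :
  x <> y -> (0 < d)%N.
Proof. by case: d x y => // x y; rewrite (thinmx0 x) (thinmx0 y). Qed.

Section CongruenceHypergraphs.
Variables (R : realType) (d : nat) (N : 'rV[R]_d -> R) (Q : set (set 'rV[R]_d)).
Local Notation V := 'rV[R]_d.
Hypothesis Q_edges :
  forall f, Q f -> finite_set f /\ exists x y, [/\ f x, f y & x <> y].

Lemma congruent_affine (A B : set V) : congruent N A B ->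
  exists f v, lin_isometry N f /\ B = [set f x + v | x in A].
Proof.
move=> [f [v [f_iso [->|->]]]]; first by exists f, v.
exists f, (f v); split => //; congr (_ @` _); apply: funext => x.
by case: f_iso => f_lin _ _; rewrite -[x in f (x + _)]scale1r f_lin scale1r.
Qed.

Lemma E0_translate (e : set V) (w : V) :
  E0 N Q e -> E0 N Q [set x + w | x in e].
Proof.
move=> [f [Qf /congruent_affine [g [v [g_iso ->]]]]].
exists f; split => //; exists g, (v + w); split => //; left.
apply/seteqP; split => [_ [_ [x fx <-] <-]|_ [x fx <-]].
  by exists x; rewrite // addrA.
by exists (g x + v); [exists x|rewrite addrA].
Qed.

Lemma E0_finite (e : set V) : E0 N Q e -> finite_set e.
Proof.
move=> [f [/Q_edges [finf _] /congruent_affine [g [v [_ ->]]]]].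
exact: finite_image.
Qed.

Lemma E0_neq0 (e : set V) : E0 N Q e -> e !=set0.
Proof.
move=> [f [/Q_edges [_ [x [_ [fx _ _]]]] /congruent_affine [g [v [_ ->]]]]].
by exists (g x + v), x.
Qed.

Lemma Et_sup_E0 (t : nat) (e : set V) :
  Et N Q t e -> exists2 e', E0 N Q e' & e' `<=` e.
Proof.
move=> [_ [[f [T [Qf _ _ ->]]] /congruent_affine [g [v [g_iso ->]]]]].
exists [set g x + v | x in f]; last by apply: image_subset => x fx; left.
by exists f; split => //; exists g, v; split => //; left.
Qed.

Lemma E0_setU_Et (t : nat) (e T : set V) :
  E0 N Q e -> e `&` T = set0 -> has_card T t -> Et N Q t (e `|` T).
Proof.
move=> [f [Qf /congruent_affine [g [v [g_iso ->]]]]].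
have g_surj y : exists x, g x + v = y.
  by case: g_iso => _ /(_ (y - v)) [x gx] _; exists x; rewrite gx subrK.
move=> + /(has_card_image_surj g_surj) [T' cardT' TE]; subst T => eT.
exists (f `|` T'); split.
  exists f, T'; split => //; apply/seteqP; split => // x [fx T'x].
  have : ([set g x + v | x in f] `&` [set g x + v | x in T']) (g x + v).
    by split; exists x.
  by rewrite eT.
by exists g, v; split => //; left; rewrite image_setU.
Qed.

Lemma mono_E0_finite_class (t k : nat) (c : V -> 'I_k) (e : set V) (i : 'I_k) :
  proper_coloring (Et N Q t) c -> E0 N Q e -> (forall x, e x -> c x = i) ->
  finite_set (c @^-1` [set i]).
Proof.
move=> c_proper E0e e_mono; apply: contrapT => /infinite_setD /(_ (E0_finite E0e)).
move=> /(infinite_set_has_card t) [T Tsub cardT].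
apply: (c_proper (e `|` T)).
  apply: E0_setU_Et => //; apply/seteqP; split => // x [ex /Tsub []].
  by move=> _ /(_ ex).
by exists i => x [/e_mono|/Tsub []].
Qed.

Lemma E0_colorable_on_finite (t k : nat) (c : V -> 'I_k) : (0 < d)%N ->
  proper_coloring (Et N Q t) c ->
  forall A : {fset V}, colorable [set e | E0 N Q e /\ e `<=` [set` A]] k.
Proof.
move=> d_gt0 c_proper A.
have [w avoid] :=
  translation_avoiding d_gt0 (finite_fset A) (finite_set_finite_fibers c).
exists (fun x => c (x + w)) => e [E0e eA] [i e_mono].
have [p ep] := E0_neq0 E0e.
apply: (avoid p (eA p ep)); rewrite /= e_mono //.
apply: (mono_E0_finite_class c_proper (E0_translate w E0e)).
by move=> _ [x ex <-]; exact: e_mono.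
Qed.

Lemma colorable_E0_of_Et (t k : nat) :
  colorable (Et N Q t) k -> colorable (E0 N Q) k.
Proof.
move=> [c c_proper]; have [[f Qf]|noQ] := pselect (exists f, Q f); last first.
  by exists c => e [f [Qf _]]; case: noQ; exists f.
have [_ [x [y [_ _ /rV_dim_gt0 d_gt0]]]] := Q_edges Qf.
apply: colorable_of_finite_subhypergraphs => [e|]; first exact: E0_finite.
exact: E0_colorable_on_finite d_gt0 c_proper.
Qed.

Lemma colorable_Et_of_E0 (t k : nat) :
  colorable (E0 N Q) k -> colorable (Et N Q t) k.
Proof. exact/colorable_subedges/Et_sup_E0. Qed.

End CongruenceHypergraphs.

Theorem theorem4p4 (R : realType) (d : nat) (N : 'rV[R]_d -> R)
  (Q : set (set 'rV[R]_d)) :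
  is_norm N ->
  (forall f, Q f -> finite_set f /\ exists x y, [/\ f x, f y & x <> y]) ->
  (exists k : nat, colorable (E0 N Q) k) ->
  forall t : nat, (0 < t)%N ->
  forall n : nat, chromatic_number_is (E0 N Q) n ->
  chromatic_number_is (Et N Q t) n.
Proof.
move=> _ Q_edges _ t _ n [E0_col E0_min]; split.
  exact: colorable_Et_of_E0 E0_col.
by move=> m /(colorable_E0_of_Et Q_edges); exact: E0_min.
Qed.
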